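(* Assume the structural model (F2) and that $\pi_{b.a}>0$ for all $a,b\in\{0,1\}$ (and that the denominators below are positive). Then the following bounds are valid and sharp: $$1-\frac{1-p_{00.1}}{p_{10.0}}\le VE(0)\le 1-\frac{p_{10.1}}{1-p_{00.0}},$$ $$1-\frac{1-p_{01.1}}{p_{11.0}}\le VE(1)\le 1-\frac{p_{11.1}}{1-p_{01.0}},$$ $$1-\frac{1-p_{01.1}}{p_{10.0}}\le VE_T\le 1-\frac{p_{11.1}}{1-p_{00.0}}.$$
   Context: Variables: randomized vaccine assignment $A\in\{0,1\}$; message $M\in\{-1,0,1\}$ ($M=-1$: blinded; $M=1$: told vaccinated; $M=0$: told unvaccinated); belief $B\in\{0,1\}$ ($B=1$: believes vaccinated); adverse-event indicator $S\in\{0,1\}$; infection indicator $Y\in\{0,1\}$; an unmeasured real-valued random variable $U$. For $a\in\{0,1\}$, $m\in\{-1,0,1\}$, $Y^{a,m},B^{a,m},S^{a,m}$ denote the potential values of $Y,B,S$ under the joint intervention $A=a,M=m$ in the structural model. The observed data come from a two-arm trial in which $A$ is randomized and $M=-1$ with probability one, so the observed vector is $(A,S,B,Y)=(A,S^{A,-1},B^{A,-1},Y^{A,-1})$. Estimands: $VE(m)=1-E(Y^{1,m})/E(Y^{0,m})$ for $m\in\{0,1\}$ and $VE_T=1-E(Y^{1,1})/E(Y^{0,0})$. Observed-data notation (two-arm trial): $p_{y.a}=\Pr(Y=y\mid A=a)$, $p_{y.ab}=\Pr(Y=y\mid A=a,B=b)$, $p_{y.abs}=\Pr(Y=y\mid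 A=a,B=b,S=s)$, $p_{yb.a}=\Pr(Y=y,B=b\mid A=a)$, $p_{yb.as}=\Pr(Y=y,B=b\mid A=a,S=s)$, $\pi_{b.a}=\Pr(B=b\mid A=a)$, $\pi_{b.as}=\Pr(B=b\mid A=a,S=s)$, $\gamma_{s.a}=\Pr(S=s\mid A=a)$. Bounds $L\le\theta\le R$ (functions of the observed law) are valid if for every structural model in the stated class satisfying the stated assumptions and inducing the given observed law, $\theta\in[L,R]$; they are sharp if every value in $[L,R]$ is attained by some such model. Structural model (F2): nonparametric structural equations with mutually independent errors: $A=f_A(\varepsilon_A)$, $U=f_U(\varepsilon_U)$, $M=f_M(\varepsilon_M)$, $B=M$ if $M\neq-1$ and $B=f_B(A,U,\varepsilon_B)$ if $M=-1$, $Y=f_Y(A,B,U,\varepsilon_Y)$, with arbitrary functions $f_\cdot$; potential outcomes are obtained by setting $A=a$, $M=m$ in these equations (so $B^{a,m}=m$ for $m\in\{0,1\}$). $S$ is not used. *)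

From HB Require Import structures.
From mathcomp Require Import all_boot all_order all_algebra.
From mathcomp Require Import all_classical all_reals all_analysis.

Set Implicit Arguments.
Unset Strict Implicit.
Unset Printing Implicit Defensive.
Import Order.TTheory GRing.Theory Num.Theory.
Local Open Scope classical_set_scope.
Local Open Scope ring_scope.

(* The message M in {-1,0,1}:  blinded  <-> M = -1,
                               told true  <-> M = 1 (told vaccinated),
                               told false <-> M = 0 (told unvaccinated). *)
Inductive msg := blinded | told of bool.

(* Binary variables are encoded by bool: true <-> 1, false <-> 0. *)

(* Errors eps_A, eps_U, eps_M, eps_B, eps_Y take values in arbitrary
   measurable spaces and are mutually independent (product rule over all
   measurable events; taking some events to be the whole space gives the
   product rule for every subfamily). *)
Record F2model (R : realType) := F2Model {
  dO : measure_display; Omega : measurableType dO; Pr : probability Omega R;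
  dA : measure_display; EA : measurableType dA;
  dU : measure_display; EU : measurableType dU;
  dM : measure_display; EM : measurableType dM;
  dB : measure_display; EB : measurableType dB;
  dY : measure_display; EY : measurableType dY;
  epsA : Omega -> EA; epsU : Omega -> EU; epsM : Omega -> EM;
  epsB : Omega -> EB; epsY : Omega -> EY;
  fA : EA -> bool;
  fU : EU -> R;
  fM : EM -> msg;
  fB : bool -> R -> EB -> bool;
  fY : bool -> bool -> R -> EY -> bool;
  epsA_meas : measurable_fun setT epsA;
  epsU_meas : measurable_fun setT epsU;
  epsM_meas : measurable_fun setT epsM;
  epsB_meas : measurable_fun setT epsB;
  epsY_meas : measurable_fun setT epsY;
  fA_meas : forall a, measurable (fA @^-1` [set a]);
  fU_meas : measurable_fun setT fU;
  fM_meas : forall m, measurable (fM @^-1` [set m]);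
  fB_meas : forall a b, measurable [set p : R * EB | fB a p.1 p.2 = b];
  fY_meas : forall a b y, measurable [set p : R * EY | fY a b p.1 p.2 = y];
  eps_indep : forall (SA : set EA) (SU : set EU) (SM : set EM)
      (SB : set EB) (SY : set EY),
      measurable SA -> measurable SU -> measurable SM ->
      measurable SB -> measurable SY ->
      Pr (epsA @^-1` SA `&` epsU @^-1` SU `&` epsM @^-1` SM
          `&` epsB @^-1` SB `&` epsY @^-1` SY) =
      (Pr (epsA @^-1` SA) * Pr (epsU @^-1` SU) * Pr (epsM @^-1` SM)
       * Pr (epsB @^-1` SB) * Pr (epsY @^-1` SY))%E
}.

Section F2defs.
Variables (R : realType) (m : F2model R).

Definition Avar (w : Omega m) : bool := @fA _ m (@epsA _ m w).
Definition Uvar (w : Omega m) : R := @fU _ m (@epsU _ m w).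
Definition Mvar (w : Omega m) : msg := @fM _ m (@epsM _ m w).
Definition Bvar (w : Omega m) : bool :=
  match Mvar w with told b => b | blinded => @fB _ m (Avar w) (Uvar w) (@epsB _ m w) end.
Definition Yvar (w : Omega m) : bool := @fY _ m (Avar w) (Bvar w) (Uvar w) (@epsY _ m w).

(* potential outcome Y^{a,mm} for mm in {0,1} (encoded as a bool):
   setting A = a, M = mm gives B^{a,mm} = mm *)
Definition Ypot (a mm : bool) (w : Omega m) : bool :=
  @fY _ m a mm (Uvar w) (@epsY _ m w).

Definition prob (S : set (Omega m)) : R := fine (@Pr _ m S).

Definition EYpot (a mm : bool) : R := prob [set w | Ypot a mm w = true].

Definition blinded_trial : Prop := @Pr _ m [set w | Mvar w = blinded] = 1%E.

Definition obs_joint (a b y : bool) : R :=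
  prob [set w | Avar w = a /\ Bvar w = b /\ Yvar w = y].
Definition pA (a : bool) : R := prob [set w | Avar w = a].

Definition p_yb_a (y b a : bool) : R := obs_joint a b y / pA a.
Definition pi_b_a (b a : bool) : R :=
  prob [set w | Avar w = a /\ Bvar w = b] / pA a.

Definition VE (mm : bool) : R := 1 - EYpot true mm / EYpot false mm.
Definition VE_T : R := 1 - EYpot true true / EYpot false false.

End F2defs.

Definition same_obs_law (R : realType) (m1 m2 : F2model R) : Prop :=
  forall a b y : bool, obs_joint m1 a b y = obs_joint m2 a b y.

(** Validity: on the event [A = a /\ B = b /\ Y = y] the outcome equals the
    potential outcome [Y^{a,b}], whatever message was sent, and [Y^{a,b}] is
    a function of [(U, eps_Y)], which is independent of [A]. Hence
    [Pr(A=a, B=b, Y=y) <= Pr(A=a) Pr(Y^{a,b}=y)], which brackets each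
    [E(Y^{a,b})] between [p_{1b.a}] and [1 - p_{0b.a}]; the vaccine
    efficacies are monotone in these two means.

    Sharpness: the observed law does not identify how [Y] depends on the
    assignment [(A, B)] for units whose blinded belief would differ from the
    intervened one. A threshold model, with [B] determined by a uniform [U]
    and [Y] by an independent uniform error, reproduces the observed law and
    lets the outcome probability on that unobserved stratum be any [q] in
    [[0, 1]]; moving [q] continuously sweeps [E(Y^{1,b1}) / E(Y^{0,b0})]
    over the whole interval. *)

From HB Require Import structures.
From mathcomp Require Import all_boot all_order all_algebra.
From mathcomp Require Import all_classical all_reals all_analysis.
From mathcomp Require Import ring lra measurable_realfun.
Import Order.TTheory GRing.Theory Num.Theory.
Local Open Scope classical_set_scope.
Local Open Scope ring_scope.

Lemma measurable_preimage {d1 d2} {T1 : measurableType d1}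
    {T2 : measurableType d2} {f : T1 -> T2} {S : set T2} :
  measurable_fun setT f -> measurable S -> measurable (f @^-1` S).
Proof. by move=> mf mS; rewrite -[_ @^-1` _]setTI; exact: mf. Qed.

Section fine_probability.
Context {d} {T : measurableType d} {R : realType} (P : probability T R).
Local Notation pr S := (fine (P S)).

Lemma pr_EFin (S : set T) : measurable S -> P S = (pr S)%:E.
Proof. by move=> mS; rewrite fineK // fin_num_measure. Qed.

Lemma pr_ge0 (S : set T) : 0 <= pr S.
Proof. by apply: fine_ge0; exact: measure_ge0. Qed.

Lemma pr_le (A B : set T) : measurable A -> measurable B -> A `<=` B ->
  pr A <= pr B.
Proof.
move=> mA mB AB; rewrite -lee_fin -!pr_EFin //.
by apply: le_measure => //; rewrite inE.
Qed.

Lemma prU (A B : set T) : measurable A -> measurable B -> A `&` B = set0 ->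
  pr (A `|` B) = pr A + pr B.
Proof. by move=> mA mB AB; rewrite measureU // fineD // fin_num_measure. Qed.

Lemma pr_setC (A : set T) : measurable A -> pr (~` A) = 1 - pr A.
Proof. by move=> mA; rewrite probability_setC // pr_EFin. Qed.

Lemma pr_split_bool (Q : set T) (f : T -> bool) :
  measurable Q -> measurable [set w | f w = true] ->
  pr Q = pr (Q `&` [set w | f w = true]) + pr (Q `&` [set w | f w = false]).
Proof.
move=> mQ mF; rewrite -prU; first last.
- by apply/seteqP; split => // w /= [[_ ->] []].
- apply: measurableI => //; rewrite [X in measurable X](_ : _ = ~` [set w | f w = true]).
    exact: measurableC.
  by apply/seteqP; split => w /=; case: (f w).
- exact: measurableI.
by congr (fine (P _)); apply/seteqP; split => w /=; [case: (f w); tauto | tauto].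
Qed.

End fine_probability.

Section pair_independence.
Context {d dX dY dZ} {Omega : measurableType d} {TX : measurableType dX}
  {TY : measurableType dY} {TZ : measurableType dZ} {R : realType}
  (P : probability Omega R) {X : Omega -> TX} {Y : Omega -> TY} {Z : Omega -> TZ}.
Hypotheses (mX : measurable_fun setT X) (mY : measurable_fun setT Y)
  (mZ : measurable_fun setT Z).
Hypothesis indep_rect : forall SX SY SZ,
  measurable SX -> measurable SY -> measurable SZ ->
  P (X @^-1` SX `&` Y @^-1` SY `&` Z @^-1` SZ) =
  (P (X @^-1` SX) * P (Y @^-1` SY `&` Z @^-1` SZ))%E.

(* Both sides are finite measures in [S] that agree on the measurable
   rectangles, a pi-system generating the product sigma-algebra. *)
Lemma indep_pair (SX : set TX) (S : set (TY * TZ)) :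
  measurable SX -> measurable S ->
  P (X @^-1` SX `&` (fun w => (Y w, Z w)) @^-1` S) =
  (P (X @^-1` SX) * P ((fun w => (Y w, Z w)) @^-1` S))%E.
Proof.
move=> mSX mS; set W := fun w => (Y w, Z w).
have mW : measurable_fun setT W by exact: measurable_fun_pair.
have mXS : measurable (X @^-1` SX) by exact: measurable_preimage.
have c0 : 0 <= fine (P (X @^-1` SX)) by exact: pr_ge0.
pose m1 : {measure set (TY * TZ) -> \bar R} := pushforward (mrestr P mXS) W.
pose m2 : {measure set (TY * TZ) -> \bar R} :=
  mscale (NngNum c0) (pushforward P W).
have := @g_sigma_algebra_measure_unique _ R _
  [set A `*` B | A in measurable & B in measurable] _ (fun=> setT) _ _
  (m1 mW) (m2 mW) _ _ _ S.
rewrite /= /mscale /mrestr /pushforward /= -(pr_EFin P _ mXS) => eqS.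
rewrite setIC; apply: eqS.
- by move=> _ [A mA [B mB <-]]; exact: measurableX.
- by move=> _; exists setT => //; exists setT => //; rewrite setXTT.
- by apply/seteqP; split => // x _; exists 0%N.
- move=> _ _ [A mA [B mB <-]] [C mC [D mD <-]].
  exists (A `&` C); first exact: measurableI.
  by exists (B `&` D); [exact: measurableI | rewrite setXI].
- move=> _ [A mA [B mB <-]] /=.
  by rewrite (_ : W @^-1` (A `*` B) = Y @^-1` A `&` Z @^-1` B) // setIC setIA indep_rect.
- move=> k; apply: (le_lt_trans (probability_le1 _ _)); last by rewrite ltry.
  by apply: measurableI => //; exact: measurable_preimage.
- by rewrite -measurable_prod_measurableType.
Qed.

End pair_independence.

Section ratio.
Context {R : realFieldType}.

Lemma ratio_bounds {x y lo1 hi1 lo0 hi0 : R} :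
  0 <= lo1 -> lo1 <= x <= hi1 -> 0 < lo0 -> lo0 <= y <= hi0 ->
  lo1 / hi0 <= x / y <= hi1 / lo0.
Proof.
move=> lo1_ge0 /andP[x1 x2] lo0_gt0 /andP[y1 y2].
have y_gt0 : 0 < y by lra.
have hi0_gt0 : 0 < hi0 by lra.
apply/andP; split; rewrite ler_pdivrMr // mulrAC ler_pdivlMr //.
  by apply: ler_pM; lra.
by apply: ler_pM; lra.
Qed.

(* The witness solves [num t = r * den t], which is linear in [t]. *)
Lemma ratio_attains (lo1 hi1 lo0 hi0 r : R) :
  0 <= lo1 <= hi1 -> 0 < lo0 <= hi0 -> lo1 / hi0 <= r <= hi1 / lo0 ->
  exists2 t, 0 <= t <= 1 &
    (lo1 + t * (hi1 - lo1)) / (lo0 + (1 - t) * (hi0 - lo0)) = r.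
Proof.
move=> /andP[lo1_ge0 lo_hi1] /andP[lo0_gt0 lo_hi0] /andP[r_lo r_hi].
have hi0_gt0 : 0 < hi0 by lra.
have r_lo' : lo1 <= r * hi0 by rewrite -ler_pdivrMr.
have r_hi' : r * lo0 <= hi1 by rewrite -ler_pdivlMr.
have r_ge0 : 0 <= r by apply: le_trans r_lo; apply: divr_ge0; lra.
have gap_ge0 : 0 <= r * (hi0 - lo0) by apply: mulr_ge0; lra.
suff [t /andP[t0 t1] eq_t] : exists2 t, 0 <= t <= 1 &
    lo1 + t * (hi1 - lo1) = r * (lo0 + (1 - t) * (hi0 - lo0)).
  have den_gt0 : 0 < lo0 + (1 - t) * (hi0 - lo0).
    have : 0 <= (1 - t) * (hi0 - lo0) by apply: mulr_ge0; lra.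
    lra.
  by exists t; [rewrite t0 t1 | rewrite eq_t mulfK // gt_eqF].
set D := (hi1 - lo1) + r * (hi0 - lo0).
have [D0|D_neq0] := eqVneq D 0.
  exists 0; first by rewrite lexx ler01.
  have e1 : hi1 = lo1 by rewrite /D in D0; lra.
  have e2 : r * hi0 = r * lo0 by rewrite /D in D0; lra.
  rewrite !mul0r addr0 subr0 mul1r mulrDr; lra.
have D_gt0 : 0 < D by rewrite lt0r D_neq0 /D /=; lra.
exists ((r * hi0 - lo1) / D).
  by apply/andP; split; [apply: divr_ge0; lra | rewrite ler_pdivrMr // mul1r /D; lra].
apply: (@mulfI _ D) => //.
have -> : D * (lo1 + (r * hi0 - lo1) / D * (hi1 - lo1)) =
  D * lo1 + (r * hi0 - lo1) * (hi1 - lo1) by field.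
have -> : D * (r * (lo0 + (1 - (r * hi0 - lo1) / D) * (hi0 - lo0))) =
  D * r * hi0 - r * (r * hi0 - lo1) * (hi0 - lo0) by field.
by rewrite /D; ring.
Qed.

End ratio.

Definition prob_AB {R : realType} (m : F2model R) (a b : bool) : R :=
  @prob R m [set w | @Avar R m w = a /\ @Bvar R m w = b].

Definition VE_contrast {R : realType} (m : F2model R) (b1 b0 : bool) : R :=
  1 - EYpot m true b1 / EYpot m false b0.

Section F2model_observed.
Context {R : realType} (m : F2model R).
Local Notation P := (Pr m).
Local Notation o := (obs_joint m).
Local Notation pr := (@prob R m).
Local Notation Av := (@Avar R m).
Local Notation Bv := (@Bvar R m).
Local Notation Mv := (@Mvar R m).
Local Notation Uv := (@Uvar R m).
Local Notation Yv := (@Yvar R m).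
Local Notation Yp := (@Ypot R m).

Lemma measurable_Uvar : measurable_fun setT Uv.
Proof. exact: measurableT_comp (@fU_meas R m) (@epsU_meas R m). Qed.

Lemma measurable_Avar_eq a : measurable [set w | Av w = a].
Proof. exact: measurable_preimage (@epsA_meas R m) (fA_meas m a). Qed.

Lemma measurable_Mvar_eq mm : measurable [set w | Mv w = mm].
Proof. exact: measurable_preimage (@epsM_meas R m) (@fM_meas R m mm). Qed.

Lemma measurable_fB_eq a b :
  measurable [set w | @fB R m a (Uv w) (@epsB R m w) = b].
Proof.
exact: measurable_preimage
  (measurable_fun_pair measurable_Uvar (@epsB_meas R m)) (@fB_meas R m a b).
Qed.

Lemma measurable_Ypot_eq a b y : measurable [set w | Yp a b w = y].
Proof.
exact: measurable_preimage
  (measurable_fun_pair measurable_Uvar (@epsY_meas R m)) (@fY_meas R m a b y).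
Qed.

Lemma measurable_Bvar_eq b : measurable [set w | Bv w = b].
Proof.
have -> : [set w | Bv w = b] =
  [set w | Mv w = told b] `|` ([set w | Mv w = blinded] `&`
   (([set w | Av w = true] `&` [set w | @fB R m true (Uv w) (@epsB R m w) = b])
    `|` ([set w | Av w = false] `&` [set w | @fB R m false (Uv w) (@epsB R m w) = b]))).
  apply/seteqP; split => w /=; rewrite /Bvar.
    case: (Mv w) => [|c] H; last by left; rewrite H.
    by right; split => //; case E: (Av w) H => H; [left|right].
  case: (Mv w) => [|c]; last by case=> [[]|[]].
  by case=> [//|[_ [[E H]|[E H]]]]; rewrite E.
apply: measurableU; first exact: measurable_Mvar_eq.
apply: measurableI; first exact: measurable_Mvar_eq.
by apply: measurableU; apply: measurableI;
  (exact: measurable_Avar_eq || exact: measurable_fB_eq).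
Qed.

Lemma measurable_AB_eq a b : measurable [set w | Av w = a /\ Bv w = b].
Proof. exact: measurableI (measurable_Avar_eq a) (measurable_Bvar_eq b). Qed.

Lemma measurable_Yvar_eq y : measurable [set w | Yv w = y].
Proof.
have -> : [set w | Yv w = y] =
  \big[setU/set0]_(a <- [:: true; false]) \big[setU/set0]_(b <- [:: true; false])
   ([set w | Av w = a /\ Bv w = b] `&` [set w | Yp a b w = y]).
  rewrite !big_cons !big_nil !setU0.
  apply/seteqP; split => w /=; rewrite /Yvar /Ypot.
    by case: (Av w); case: (Bv w) => ?;
      [left; left | left; right | right; left | right; right].
  by case=> [[]|[]] [[-> ->]].
rewrite !big_cons !big_nil !setU0.
by apply: measurableU; apply: measurableU; apply: measurableI;
  (exact: measurable_AB_eq || exact: measurable_Ypot_eq).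
Qed.

Lemma prob_AB_split a b : prob_AB m a b = o a b true + o a b false.
Proof.
rewrite /prob_AB /prob (pr_split_bool _ _ Yv);
  [|exact: measurable_AB_eq|exact: measurable_Yvar_eq].
by congr (fine (P _) + fine (P _)); apply/seteqP; split => w /=; tauto.
Qed.

Lemma pA_split a : pA m a = prob_AB m a true + prob_AB m a false.
Proof.
rewrite /pA /prob (pr_split_bool _ _ Bv);
  [|exact: measurable_Avar_eq|exact: measurable_Bvar_eq].
by congr (fine (P _) + fine (P _)); apply/seteqP; split => w /=; tauto.
Qed.

Lemma pA_true_add_false : pA m true + pA m false = 1.
Proof.
have := pr_split_bool P setT Av measurableT (measurable_Avar_eq true).
by rewrite !setTI probability_setT.
Qed.

Lemma pA_gt0 : (forall a b, 0 < pi_b_a m b a) -> forall a, 0 < pA m a.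
Proof.
move=> pi_gt0 a; have := pi_gt0 a true; rewrite /pi_b_a lt0r => /andP[+ _].
rewrite lt0r pr_ge0 andbT; apply: contra => /eqP ->.
by rewrite invr0 mulr0.
Qed.

Lemma indep_Avar_Ypot a b y :
  pr ([set w | Av w = a] `&` [set w | Yp a b w = y]) =
  pA m a * pr [set w | Yp a b w = y].
Proof.
have indep_AUY SA SU SY : measurable SA -> measurable SU -> measurable SY ->
    P (@epsA R m @^-1` SA `&` @epsU R m @^-1` SU `&` @epsY R m @^-1` SY) =
    (P (@epsA R m @^-1` SA) * P (@epsU R m @^-1` SU `&` @epsY R m @^-1` SY))%E.
  move=> mSA mSU mSY.
  have := eps_indep mSA mSU measurableT measurableT mSY.
  rewrite !preimage_setT !setIT probability_setT !mule1 => ->.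
  have := eps_indep measurableT mSU measurableT measurableT mSY.
  rewrite !preimage_setT !setIT !setTI probability_setT !mule1 !mul1e => ->.
  by rewrite muleA.
have mg : measurable_fun setT (fun p : EU m * EY m => (@fU R m p.1, p.2)).
  apply: measurable_fun_pair; last exact: measurable_snd.
  exact: measurableT_comp (@fU_meas R m) measurable_fst.
have := indep_pair P (@epsA_meas R m) (@epsU_meas R m) (@epsY_meas R m) indep_AUY _ _
  (fA_meas m a) (measurable_preimage mg (@fY_meas R m a b y)).
rewrite /pA /prob => ->.
rewrite fineM //; apply: fin_num_measure;
  [exact: measurable_Avar_eq | exact: measurable_Ypot_eq].
Qed.

Lemma obs_joint_le_Ypot a b y :
  o a b y <= pA m a * pr [set w | Yp a b w = y].
Proof.
rewrite -indep_Avar_Ypot; apply: pr_le.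
- apply: measurableI; first exact: measurable_Avar_eq.
  exact: measurableI (measurable_Bvar_eq b) (measurable_Yvar_eq y).
- by apply: measurableI; [exact: measurable_Avar_eq|exact: measurable_Ypot_eq].
- by move=> w [Ha [Hb Hy]]; split => //=; rewrite -Hy /Yvar Ha Hb.
Qed.

Lemma prob_Ypot_false a b :
  pr [set w | Yp a b w = false] = 1 - EYpot m a b.
Proof.
rewrite /EYpot /prob -pr_setC; last exact: measurable_Ypot_eq.
by congr (fine (P _)); apply/seteqP; split => w /=; case: (Yp a b w).
Qed.

Lemma EYpot_bounds a b : 0 < pA m a ->
  p_yb_a m true b a <= EYpot m a b <= 1 - p_yb_a m false b a.
Proof.
move=> pA_gt0; rewrite /p_yb_a !ler_pdivrMr //.
rewrite lerBrDr addrC -lerBrDr ler_pdivrMr // -prob_Ypot_false.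
by rewrite -!(mulrC (pA m a)) !obs_joint_le_Ypot.
Qed.

Lemma p_yb_a_add b a : p_yb_a m true b a + p_yb_a m false b a = pi_b_a m b a.
Proof. by rewrite /p_yb_a -mulrDl -prob_AB_split. Qed.

Lemma pi_b_a_add a : 0 < pA m a -> pi_b_a m true a + pi_b_a m false a = 1.
Proof. by move=> pA_gt0; rewrite /pi_b_a -mulrDl -pA_split divff // gt_eqF. Qed.

Lemma p_yb_a_ge0 y b a : 0 <= p_yb_a m y b a.
Proof. by apply: divr_ge0; exact: pr_ge0. Qed.

Lemma VE_contrast_bounds b1 b0 : (forall a b, 0 < pi_b_a m b a) ->
  0 < p_yb_a m true b0 false ->
  1 - (1 - p_yb_a m false b1 true) / p_yb_a m true b0 false <= VE_contrast m b1 b0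
    <= 1 - p_yb_a m true b1 true / (1 - p_yb_a m false b0 false).
Proof.
move=> pi_gt0 lo0_gt0; have pA_pos := pA_gt0 pi_gt0.
have /andP[lo hi] := ratio_bounds (p_yb_a_ge0 true b1 true)
  (EYpot_bounds true b1 (pA_pos true)) lo0_gt0 (EYpot_bounds false b0 (pA_pos false)).
by rewrite /VE_contrast; apply/andP; split; lra.
Qed.

End F2model_observed.

Definition bern_mass {R : pzRingType} (p : R) (b : bool) : R :=
  if b then p else 1 - p.

Section uniform01.
Context {R : realType}.
Local Notation U01 := (uniform_prob (@ltr01 R) : probability (measurableTypeR R) R).

Lemma measurable_ltr_eq (t : R) (b : bool) : measurable [set u : R | (u < t) = b].
Proof.
have mlt : measurable_fun setT (fun u : R => u < t) by exact: measurable_fun_ltr.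
by have := mlt measurableT [set b] I; rewrite setTI.
Qed.

Lemma uniform01_lt (t : R) : 0 <= t <= 1 -> U01 [set u | u < t] = t%:E.
Proof.
move=> /andP[t0 t1].
rewrite /= /uniform_prob integral_uniform_pdf.
have -> : [set u | u < t] `&` `[0, 1] = `[0, t[%classic :> set R.
  apply/seteqP; split => u /=; rewrite !in_itv /=.
    by move=> [ut /andP[-> _]].
  move=> /andP[u0 ut]; split => //; apply/andP; split => //.
  by apply: ltW; apply: lt_le_trans ut t1.
rewrite (eq_integral (cst 1%:E)); last first.
  move=> x; rewrite inE/= in_itv/= /uniform_pdf => /andP[x0 xt].
  by rewrite x0 /= (ltW (lt_le_trans xt t1)) /= subr0 invr1.
rewrite integral_cst//= lebesgue_measure_itv/= lte_fin.
rewrite mul1e oppr0 adde0; case: ifPn => // /negP tle.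
by have -> : t = 0 by apply/eqP; rewrite eq_le t0 andbT leNgt; apply/negP.
Qed.

Lemma uniform01_ltr_eq (t : R) (b : bool) : 0 <= t <= 1 ->
  U01 [set u | (u < t) = b] = (bern_mass t b)%:E.
Proof.
move=> t01; case: b => /=.
  by rewrite -uniform01_lt //; congr (U01 _); apply/seteqP; split => u /=.
have -> : [set u : measurableTypeR R | (u < t) = false] = ~` [set u | u < t].
  by apply/seteqP; split => u /=; case: (u < t).
by rewrite probability_setC ?uniform01_lt //; exact: (measurable_ltr_eq t true).
Qed.

Lemma bernoulli_set1 (p : R) (a : bool) : 0 <= p <= 1 ->
  bernoulli_prob p [set a] = (bern_mass p a)%:E.
Proof.
move=> p01; rewrite bernoulli_probE // !diracE.
by case: a; rewrite /= ?in_set1 ?mem_set //= ?memNset //= ?mule1 ?mule0 ?adde0 ?add0e.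
Qed.

End uniform01.

Section product_coordinates.
Context {d1 d2 d3} {T1 : measurableType d1} {T2 : measurableType d2}
  {T3 : measurableType d3} {R : realType} (P : probability (T1 * (T2 * T3))%type R)
  (P1 : probability T1 R) (P2 : probability T2 R) (P3 : probability T3 R).
Hypothesis P_rect : forall A B C, measurable A -> measurable B -> measurable C ->
  P (A `*` (B `*` C)) = (P1 A * (P2 B * P3 C))%E.

(* The product rule demanded by [eps_indep], with constant errors [eps_M] and
   [eps_B]. *)
Lemma product_coordinates_indep (SA : set T1) (SU : set T2) (SM SB : set bool)
    (SY : set T3) :
  measurable SA -> measurable SU -> measurable SM -> measurable SB ->
  measurable SY ->
  P (fst @^-1` SA `&` (fun w => w.2.1) @^-1` SU `&` (fun=> true) @^-1` SM
    `&` (fun=> true) @^-1` SB `&` (fun w => w.2.2) @^-1` SY) =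
  (P (fst @^-1` SA) * P ((fun w => w.2.1) @^-1` SU) * P ((fun=> true) @^-1` SM)
   * P ((fun=> true) @^-1` SB) * P ((fun w => w.2.2) @^-1` SY))%E.
Proof.
move=> mA mU mM mB mY.
have cst_preimage (S : set bool) : (fun=> true) @^-1` S =
    if pselect (S true) then setT else set0 :> set (T1 * (T2 * T3)).
  by case: pselect => St; apply/seteqP; split.
rewrite !cst_preimage.
case: (pselect (SM true)) => SMt; last by rewrite !setI0 !set0I !measure0 mule0 !mul0e.
case: (pselect (SB true)) => SBt; last by rewrite !setI0 !set0I !measure0 mule0 !mul0e.
rewrite !setIT probability_setT !mule1.
have -> : fst @^-1` SA `&` (fun w : T1 * (T2 * T3) => w.2.1) @^-1` SU
    `&` (fun w => w.2.2) @^-1` SY = SA `*` (SU `*` SY).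
  by apply/seteqP; split => -[a [u e]] //=; [case=> [[]] | case=> ? []].
have -> : fst @^-1` SA = SA `*` (@setT T2 `*` @setT T3).
  by apply/seteqP; split => -[a [u e]] //= [].
have -> : (fun w : T1 * (T2 * T3) => w.2.1) @^-1` SU = setT `*` (SU `*` setT).
  by apply/seteqP; split => -[a [u e]] //= [_ []].
have -> : (fun w : T1 * (T2 * T3) => w.2.2) @^-1` SY = setT `*` (setT `*` SY).
  by apply/seteqP; split => -[a [u e]] //= [_ []].
by rewrite !P_rect // !probability_setT !mule1 !mul1e muleA.
Qed.

End product_coordinates.

(* The observed law fixes [c a b = Pr(Y = 1 | A = a, B = b)]; the outcome
   probability [q a b] of the units whose blinded belief differs from [b] is
   invisible in the trial and enters only [Y^{a,b}]. *)
Section threshold_model.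
Context {R : realType}.
Local Notation RL := (measurableTypeR R).
Local Notation U01 := (uniform_prob (@ltr01 R) : probability RL R).
Variables (pa : R) (thr : bool -> R) (c q : bool -> bool -> R).

Definition threshold_prob : probability (bool * (RL * RL))%type R :=
  (bernoulli_prob pa \x (U01 \x U01))%E.

Definition threshold_fB (a : bool) (u : R) (_ : bool) : bool := u < thr a.

Definition threshold_fY (a b : bool) (u : R) (e : RL) : bool :=
  if (u < thr a) == b then e < c a b else e < q a b.

Lemma threshold_prob_rect (A : set bool) (B C : set RL) :
  measurable A -> measurable B -> measurable C ->
  threshold_prob (A `*` (B `*` C)) = (bernoulli_prob pa A * (U01 B * U01 C))%E.
Proof.
move=> mA mB mC; apply: etrans (product_measure1E (bernoulli_prob pa : probability bool R)
  ((U01 \x U01)%E : probability _ R) mA (measurableX mB mC)) _.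
by congr (_ * _)%E; exact: product_measure1E.
Qed.

Lemma measurable_threshold_fB a b :
  measurable [set p : R * bool | threshold_fB a p.1 p.2 = b].
Proof.
rewrite (_ : [set p | _] = [set u : R | (u < thr a) = b] `*` setT).
  exact: measurableX (measurable_ltr_eq _ _) measurableT.
by apply/seteqP; split => -[u e] //= [].
Qed.

Lemma measurable_threshold_fY a b y :
  measurable [set p : R * RL | threshold_fY a b p.1 p.2 = y].
Proof.
rewrite (_ : [set p | _] =
  ([set u : R | (u < thr a) = b] `*` [set e : RL | (e < c a b) = y]) `|`
  ([set u : R | (u < thr a) = ~~ b] `*` [set e : RL | (e < q a b) = y])).
  by apply: measurableU; apply: measurableX; exact: measurable_ltr_eq.
apply/seteqP; split => -[u e]; rewrite /threshold_fY /=;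
  case: (u < thr a); case: b => /=; try tauto; by case=> -[].
Qed.

Lemma measurable_fun_measurableTypeR_id : measurable_fun setT (fun u : RL => u : R).
Proof. by move=> _ S mS; rewrite setTI. Qed.

Definition threshold_model : F2model R :=
  @F2Model R _ _ threshold_prob _ bool _ RL _ bool _ bool _ RL
    fst (fun w => w.2.1) (fun=> true) (fun=> true) (fun w => w.2.2)
    id (fun u : RL => u : R) (fun=> blinded) threshold_fB threshold_fY
    measurable_fst (measurableT_comp measurable_fst measurable_snd)
    (measurable_cst true) (measurable_cst true)
    (measurableT_comp measurable_snd measurable_snd)
    (fun=> I) measurable_fun_measurableTypeR_id (fun=> I) measurable_threshold_fB
    measurable_threshold_fY
    (product_coordinates_indep _ _ _ _ threshold_prob_rect).

Lemma threshold_blinded : blinded_trial threshold_model.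
Proof.
rewrite /blinded_trial -(probability_setT threshold_prob).
by congr (threshold_prob _); apply/seteqP; split.
Qed.

Hypotheses (pa01 : 0 <= pa <= 1) (thr01 : forall a, 0 <= thr a <= 1)
  (c01 : forall a b, 0 <= c a b <= 1) (q01 : forall a b, 0 <= q a b <= 1).

Lemma threshold_obs_joint a b y : obs_joint threshold_model a b y =
  bern_mass pa a * bern_mass (thr a) b * bern_mass (c a b) y.
Proof.
rewrite /obs_joint /prob.
rewrite (_ : [set w | _] =
  [set a] `*` ([set u : RL | (u < thr a) = b] `*` [set e : RL | (e < c a b) = y])).
  rewrite [Pr _ _]threshold_prob_rect //; try exact: measurable_ltr_eq.
  by rewrite bernoulli_set1 // !uniform01_ltr_eq // -!EFinM /= mulrA.
apply/seteqP; split => -[a' [u e]];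
  rewrite /Avar /Bvar /Yvar /Mvar /Uvar /= /threshold_fY /threshold_fB /=.
  by move=> [-> [<- <-]]; rewrite eqxx.
by move=> [-> [<- <-]]; rewrite eqxx.
Qed.

Lemma threshold_EYpot a b : EYpot threshold_model a b =
  bern_mass (thr a) b * c a b + bern_mass (thr a) (~~ b) * q a b.
Proof.
rewrite /EYpot /prob.
rewrite (_ : [set w | _] =
  (setT `*` ([set u : RL | (u < thr a) = b] `*` [set e : RL | (e < c a b) = true])) `|`
  (setT `*` ([set u : RL | (u < thr a) = ~~ b] `*` [set e : RL | (e < q a b) = true]))).
  rewrite prU; first last.
  - apply/seteqP; split => // -[a' [u e]] [[_ [h1 _]] [_ [h2 _]]].
    by move: h1 h2 => /= ->; case: b => /eqP.
  - by apply: measurableX => //; apply: measurableX; exact: measurable_ltr_eq.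
  - by apply: measurableX => //; apply: measurableX; exact: measurable_ltr_eq.
  rewrite !threshold_prob_rect //; try exact: measurable_ltr_eq.
  by rewrite !uniform01_ltr_eq // probability_setT !mul1e -!EFinM.
apply/seteqP; split => -[a' [u e]]; rewrite /Ypot /Uvar /= /threshold_fY /=.
  by case: (u < thr a); case: b => /= h; [left|right|right|left].
by move=> [[_ [h1 h2]]|[_ [h1 h2]]]; rewrite h1; move: h2; case: b h1.
Qed.

End threshold_model.

Section sharpness.
Context {R : realType} (m : F2model R).
Hypothesis pi_gt0 : forall a b, 0 < pi_b_a m b a.
Local Notation o := (obs_joint m).

Let pA_pos := pA_gt0 m pi_gt0.

Lemma prob_AB_gt0 a b : 0 < prob_AB m a b.
Proof.
have := mulr_gt0 (pi_gt0 a b) (pA_pos a).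
by rewrite /pi_b_a -/(prob_AB m a b) divfK // gt_eqF.
Qed.

Definition fitted_Y (a b : bool) : R := o a b true / prob_AB m a b.

Definition fitted_model (t : R) : F2model R :=
  threshold_model (pA m true) (pi_b_a m true) fitted_Y
    (fun a _ => if a then t else 1 - t).

Lemma bern_mass_pA a : bern_mass (pA m true) a = pA m a.
Proof. by case: a => //=; have := pA_true_add_false m; lra. Qed.

Lemma bern_mass_pi a b : bern_mass (pi_b_a m true a) b = pi_b_a m b a.
Proof. by case: b => //=; have := pi_b_a_add m a (pA_pos a); lra. Qed.

Lemma bern_mass_fitted_Y a b y : bern_mass (fitted_Y a b) y = o a b y / prob_AB m a b.
Proof.
case: y => //=; rewrite /fitted_Y; apply: (mulIf (lt0r_neq0 (prob_AB_gt0 a b))).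
by rewrite mulrBl !divfK ?lt0r_neq0 ?prob_AB_gt0 // mul1r prob_AB_split addrC addKr.
Qed.

Lemma pA_true_range : 0 <= pA m true <= 1.
Proof.
have := pA_true_add_false m; have := pA_pos true; have := pA_pos false.
by move=> *; apply/andP; split; lra.
Qed.

Lemma pi_true_range a : 0 <= pi_b_a m true a <= 1.
Proof.
have := pi_b_a_add m a (pA_pos a); have := pi_gt0 a true; have := pi_gt0 a false.
by move=> *; apply/andP; split; lra.
Qed.

Lemma fitted_Y_range a b : 0 <= fitted_Y a b <= 1.
Proof.
have s_gt0 := prob_AB_gt0 a b.
apply/andP; split; first by rewrite divr_ge0 ?pr_ge0 // ltW.
by rewrite ler_pdivrMr // mul1r prob_AB_split lerDl pr_ge0.
Qed.

Lemma one_sub_p_yb_a a b :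
  (1 - p_yb_a m false b a) - p_yb_a m true b a = pi_b_a m (~~ b) a.
Proof.
have := p_yb_a_add m b a; have := pi_b_a_add m a (pA_pos a).
by case: b => /=; lra.
Qed.

Lemma pi_mul_cond a b y :
  pi_b_a m b a * (o a b y / prob_AB m a b) = p_yb_a m y b a.
Proof.
have := prob_AB_gt0 a b; have := pA_pos a => /lt0r_neq0 pA0 /lt0r_neq0 s0.
by rewrite /pi_b_a /p_yb_a -/(prob_AB m a b); field; rewrite pA0 s0.
Qed.

Lemma fitted_obs_law t : same_obs_law m (fitted_model t).
Proof.
move=> a b y; rewrite threshold_obs_joint; last exact: fitted_Y_range.
  all: try exact: pA_true_range; try exact: pi_true_range.
rewrite bern_mass_pA bern_mass_pi bern_mass_fitted_Y -mulrA pi_mul_cond.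
by rewrite /p_yb_a mulrC divfK // lt0r_neq0.
Qed.

Lemma fitted_EYpot t a b : 0 <= t <= 1 ->
  EYpot (fitted_model t) a b = p_yb_a m true b a +
    (if a then t else 1 - t) * ((1 - p_yb_a m false b a) - p_yb_a m true b a).
Proof.
move=> /andP[t0 t1].
have q01 (a' _ : bool) : 0 <= (if a' then t else 1 - t) <= 1.
  by case: a'; apply/andP; split; lra.
rewrite threshold_EYpot; last exact: q01.
  all: try exact: pA_true_range; try exact: pi_true_range; try exact: fitted_Y_range.
by rewrite !bern_mass_pi pi_mul_cond one_sub_p_yb_a mulrC.
Qed.

Lemma VE_contrast_attains b1 b0 v : 0 < p_yb_a m true b0 false ->
  1 - (1 - p_yb_a m false b1 true) / p_yb_a m true b0 false <= v <=
  1 - p_yb_a m true b1 true / (1 - p_yb_a m false b0 false) ->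
  exists m' : F2model R,
    blinded_trial m' /\ same_obs_law m m' /\ VE_contrast m' b1 b0 = v.
Proof.
have gap_ge0 a b : 0 <= (1 - p_yb_a m false b a) - p_yb_a m true b a.
  by rewrite one_sub_p_yb_a ltW.
move: (gap_ge0 true b1) (gap_ge0 false b0) (p_yb_a_ge0 m true b1 true).
set lo1 := p_yb_a m true b1 true; set hi1 := 1 - p_yb_a m false b1 true.
set lo0 := p_yb_a m true b0 false; set hi0 := 1 - p_yb_a m false b0 false.
move=> gap1 gap0 lo1_ge0 lo0_gt0 /andP[v_lo v_hi].
have [t t01 ratio_t] : exists2 t, 0 <= t <= 1 &
    (lo1 + t * (hi1 - lo1)) / (lo0 + (1 - t) * (hi0 - lo0)) = 1 - v.
  by apply: ratio_attains; apply/andP; split; lra.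
exists (fitted_model t); split; first exact: threshold_blinded.
split; first exact: fitted_obs_law.
rewrite /VE_contrast !fitted_EYpot // -/lo1 -/hi1 -/lo0 -/hi0 ratio_t.
lra.
Qed.

End sharpness.

Theorem proposition1 (R : realType) (m : F2model R) :
  blinded_trial m ->
  (forall a b : bool, 0 < pi_b_a m b a) ->
  0 < p_yb_a m true false false ->
  0 < 1 - p_yb_a m false false false ->
  0 < p_yb_a m true true false ->
  0 < 1 - p_yb_a m false true false ->
  let L0 := 1 - (1 - p_yb_a m false false true) / p_yb_a m true false false in
  let R0 := 1 - p_yb_a m true false true / (1 - p_yb_a m false false false) in
  let L1 := 1 - (1 - p_yb_a m false true true) / p_yb_a m true true false in
  let R1 := 1 - p_yb_a m true true true / (1 - p_yb_a m false true false) in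
  let LT := 1 - (1 - p_yb_a m false true true) / p_yb_a m true false false in
  let RT := 1 - p_yb_a m true true true / (1 - p_yb_a m false false false) in
  (L0 <= VE m false <= R0) /\ (L1 <= VE m true <= R1) /\ (LT <= VE_T m <= RT) /\
  (forall v : R, L0 <= v <= R0 ->
     exists m' : F2model R, blinded_trial m' /\ same_obs_law m m' /\ VE m' false = v) /\
  (forall v : R, L1 <= v <= R1 ->
     exists m' : F2model R, blinded_trial m' /\ same_obs_law m m' /\ VE m' true = v) /\
  (forall v : R, LT <= v <= RT ->
     exists m' : F2model R, blinded_trial m' /\ same_obs_law m m' /\ VE_T m' = v).
Proof.
(* [VE(b)] is [VE_contrast m b b] and [VE_T] is [VE_contrast m true false];
   the positivity of [1 - p_{0b.0}] already follows from that of [pi_{b.0}]. *)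
move=> _ pi_gt0 p100_gt0 _ p110_gt0 _ L0 R0 L1 R1 LT RT.
split; first exact: VE_contrast_bounds m false false pi_gt0 p100_gt0.
split; first exact: VE_contrast_bounds m true true pi_gt0 p110_gt0.
split; first exact: VE_contrast_bounds m true false pi_gt0 p100_gt0.
split; first by move=> v; exact: VE_contrast_attains m pi_gt0 false false v p100_gt0.
split; first by move=> v; exact: VE_contrast_attains m pi_gt0 true true v p110_gt0.
by move=> v; exact: VE_contrast_attains m pi_gt0 true false v p100_gt0.
Qed.
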